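(* Let $D\ge2$ be an integer, let $(\rho^0_{kl})_{k,l=1}^D$ be a $D\times D$ density matrix (positive semidefinite, trace one), and let $(U_{mn})_{m,n=1}^D$ be a unitary matrix. Define $\mu_n=\sum_k|U_{nk}|^2\rho^0_{kk}$, $D_{\mathrm{eff}}=\bigl[\sum_n(\rho^0_{nn})^2\bigr]^{-1}$, $$\nu_{mn}=\sum_{k\neq l}U_{mk}U_{ml}^*U_{nk}^*U_{nl}|\rho^0_{kl}|^2,\qquad R=\sum_{m,n}\nu_{mn}\ln\mu_m\ln\mu_n .$$ Then $$R\le\frac{5(\ln D)^2}{D_{\mathrm{eff}}^{1/2}}+\frac{8(\ln D)^2}{D}+\frac{4(\ln D)^2}{D^2}.$$
   Context: In the sum defining $R$, terms with $\mu_m=0$ or $\mu_n=0$ are taken to be $0$ (for such indices $\nu_{mn}=0$). *)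

From mathcomp Require Import all_boot all_algebra.
From mathcomp Require Import reals exp.
From mathcomp Require Export complex.
Import GRing.Theory Num.Theory.
Local Open Scope ring_scope.
Local Open Scope complex_scope.

Section Defs.
Variables (R : realType) (D : nat).

Definition abs2 (z : R[i]) : R := complex.Re z ^+ 2 + complex.Im z ^+ 2.

Definition adjmx (A : 'M[R[i]]_D) : 'M[R[i]]_D := (map_mx (@conjc R) A)^T.

Definition density_matrix (rho : 'M[R[i]]_D) : Prop :=
  adjmx rho = rho /\
  (forall x : 'cV[R[i]]_D,
      0 <= ((map_mx (@conjc R) x)^T *m rho *m x) 0 0) /\
  \tr rho = 1.

Definition unitary (U : 'M[R[i]]_D) : Prop := U *m adjmx U = 1%:M.

Definition mu (U rho : 'M[R[i]]_D) (n : 'I_D) : R :=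
  \sum_k abs2 (U n k) * complex.Re (rho k k).

Definition Deff (rho : 'M[R[i]]_D) : R :=
  (\sum_n complex.Re (rho n n) ^+ 2)^-1.

Definition nu (U rho : 'M[R[i]]_D) (m n : 'I_D) : R[i] :=
  \sum_k \sum_(l | l != k)
     U m k * (U m l)^* * (U n k)^* * U n l * (abs2 (rho k l))%:C.

Definition Rsum (U rho : 'M[R[i]]_D) : R[i] :=
  \sum_m \sum_n
    (if (mu U rho m == 0) || (mu U rho n == 0) then 0
     else nu U rho m n * (ln (mu U rho m) * ln (mu U rho n))%:C).

End Defs.

(* Put a_m = ln mu_m and c_kl = sum_m a_m U_mk conj(U_ml).  Expanding nu, the double
   sum regroups as R = sum_{k <> l} |rho_kl|^2 |c_kl|^2.  Positivity of rho gives
   |rho_kl|^2 <= rho_kk rho_ll <= rho_kk q with q = (sum_n rho_nn^2)^(1/2) = D_eff^(-1/2),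
   and unitarity of U (Parseval) gives sum_l |c_kl|^2 = sum_m a_m^2 |U_mk|^2; hence
   R <= q sum_m mu_m ln^2 mu_m.  Since mu is a probability vector, the elementary bound
   x ln^2 x <= 4 ln^2 D (x + D^-2) on [0, 1] (valid once ln D >= 1, i.e. D >= 3) gives
   sum_m mu_m ln^2 mu_m <= 4 ln^2 D (1 + 1/D); for D = 2 the bound x ln^2 x <= 1 suffices. *)

From mathcomp Require Import all_boot all_order all_algebra.
From mathcomp Require Import reals sequences exp complex.
From mathcomp Require Import ring lra.
Set Implicit Arguments.
Unset Strict Implicit.
Unset Printing Implicit Defensive.
Import Order.TTheory GRing.Theory Num.Theory.
Local Open Scope complex_scope.
Local Open Scope ring_scope.

Section RealFacts.
Variable R : realType.
Implicit Types x d : R.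

Lemma le_mul_ln x : 0 < x -> x - 1 <= x * ln x.
Proof.
move=> x_gt0; have xV_gt0 : 0 < x^-1 by rewrite invr_gt0.
have : ln x^-1 <= x^-1 - 1.
  by have := @le_ln1Dx R (x^-1 - 1); rewrite [1 + _]addrC subrK; apply; lra.
rewrite lnV ?posrE // -(ler_pM2l x_gt0) mulrBr mulfV ?gt_eqF //; lra.
Qed.

Lemma expR_le_invB x : 0 <= x < 1 -> expR x <= (1 - x)^-1.
Proof.
case/andP=> x_ge0 x_lt1.
have : 1 - x <= (expR x)^-1 by rewrite -expRN; have := @expR_ge1Dx R (- x).
by rewrite -(invrK (expR x)) lef_pV2 ?posrE ?invr_gt0 ?expR_gt0 //; lra.
Qed.

Lemma ln2_ge_half : 2^-1 <= ln (2 : R).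
Proof.
have : expR (2^-1 : R) <= 2.
  rewrite -[X in _ <= X](_ : (1 - 2^-1)^-1 = 2); last by field.
  by apply: expR_le_invB; lra.
by move=> h; rewrite -[X in X <= _](expRK (2^-1)) ler_ln ?posrE ?expR_gt0.
Qed.

(* e = expR (1/6) ^+ 6 <= (6/5) ^+ 6 < 3 *)
Lemma ln3_ge1 : 1 <= ln (3 : R).
Proof.
have e6 : expR (6^-1 : R) <= 6 / 5.
  by rewrite (_ : 6 / 5 = (1 - 6^-1)^-1); [apply: expR_le_invB; lra | field].
have : expR (1 : R) <= 3.
  rewrite (_ : 1 = 6^-1 * 6%:R); last by field.
  rewrite expRM_natr; apply: (le_trans (y := (6 / 5) ^+ 6)).
    by rewrite lerXn2r ?nnegrE ?expR_ge0 ?divr_ge0.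
  by rewrite !exprS expr0; lra.
by move=> h; rewrite -[X in X <= _](expRK 1) ler_ln ?posrE ?expR_gt0.
Qed.

Lemma mul_sqr_ln_le1 x : 0 <= x <= 1 -> x * ln x ^+ 2 <= 1.
Proof.
case/andP; rewrite le_eqVlt => /predU1P[<-|x_gt0] x_le1; first by rewrite mul0r.
set v := Num.sqrt (Num.sqrt x).
have v_gt0 : 0 < v by rewrite !sqrtr_gt0.
have xE : x = v ^+ 4.
  by rewrite (exprM v 2 2) !sqr_sqrtr ?sqrtr_ge0 ?ltW.
have v_le1 : v <= 1 by rewrite -(@expr_le1 _ 4 v) ?(ltW v_gt0) // -xE.
(* with x = v^4: x ln^2 x = 16 (v * (v ln v))^2 and 0 <= - v ln v <= 1 - v *)
have := le_mul_ln v_gt0; have := ln_le0 v_le1.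
rewrite xE lnXn // => lnv_le0 vlnv_ge.
have w_ge0 : 0 <= v * (- (v * ln v)) by rewrite mulr_ge0 ?(ltW v_gt0) // oppr_ge0 pmulr_rle0.
have w_le : v * (- (v * ln v)) <= 4^-1.
  apply: (le_trans (y := v * (1 - v))); first by rewrite ler_pM2l //; lra.
  by have := sqr_ge0 (v - 2^-1); nra.
have : (v * (- (v * ln v))) ^+ 2 <= 4^-1 ^+ 2 by rewrite lerXn2r ?nnegrE // invr_ge0.
rewrite -mulr_natr; nra.
Qed.

Lemma mul_sqr_ln_le d x : 1 <= ln d -> 0 <= x <= 1 ->
  x * ln x ^+ 2 <= 4 * ln d ^+ 2 * (x + d ^- 2).
Proof.
move=> L_ge1 /andP[]; rewrite le_eqVlt => /predU1P[<-|x_gt0] x_le1.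
  by rewrite mul0r add0r mulr_ge0 ?invr_ge0 ?sqr_ge0 // mulr_ge0 ?sqr_ge0.
have d_gt0 : 0 < d by rewrite ltNge; apply/negP => /ln0 L0; move: L_ge1; rewrite L0; lra.
have dV2_gt0 : 0 < d ^- 2 by rewrite invr_gt0 exprn_gt0.
set L := ln d in L_ge1 *.
have [dV2_le_x|x_lt_dV2] := leP (d ^- 2) x.
  have : ln (d ^- 2) <= ln x by rewrite ler_ln ?posrE.
  rewrite lnV ?posrE ?exprn_gt0 // lnXn // -/L => lnx_ge.
  have lnx_le0 := ln_le0 x_le1.
  have : ln x ^+ 2 <= 4 * L ^+ 2 by nra.
  by nra.
(* x = (u / d)^2 with u := d sqrt x in ]0, 1], and 0 <= u (L - ln u) <= u L + 1 - u <= L *)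
set u := d * Num.sqrt x.
have u_gt0 : 0 < u by rewrite mulr_gt0 ?sqrtr_gt0.
have xE : x = u ^+ 2 / d ^+ 2.
  by rewrite exprMn sqr_sqrtr ?ltW // mulrAC divff ?mul1r // expf_neq0 ?gt_eqF.
have u_le1 : u <= 1.
  rewrite -(@expr_le1 _ 2 u) ?(ltW u_gt0) //.
  by move: x_lt_dV2; rewrite xE -[X in _ < X]mul1r ltr_pM2r // => /ltW.
have lnxE : ln x = (ln u - L) *+ 2.
  by rewrite xE ln_div ?posrE ?exprn_gt0 // !lnXn // mulrnBl.
have := le_mul_ln u_gt0; have := ln_le0 u_le1 => lnu_le0 ulnu_ge.
have w_ge0 : 0 <= u * (L - ln u) by rewrite mulr_ge0 ?(ltW u_gt0) //; lra.
have w_le : u * (L - ln u) <= L by nra.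
have : (u * (L - ln u)) ^+ 2 <= L ^+ 2 by rewrite lerXn2r ?nnegrE //; lra.
have -> : x * ln x ^+ 2 = 4 * (u * (L - ln u)) ^+ 2 / d ^+ 2.
  by rewrite lnxE {1}xE -mulr_natr; field; rewrite gt_eqF.
have L_ge0 : 0 <= L ^+ 2 by apply: sqr_ge0.
by move=> h; nra.
Qed.

End RealFacts.

Section ProbabilityVector.
Variables (R : realType) (I : finType) (p : I -> R).
Hypotheses (p_ge0 : forall i, 0 <= p i) (sum_p : \sum_i p i = 1).

Lemma prob_le1 i : p i <= 1.
Proof. by rewrite -sum_p (bigD1 i) //= lerDl sumr_ge0. Qed.

Lemma le_sqrt_sum_sqr i : p i <= Num.sqrt (\sum_j p j ^+ 2).
Proof.
rewrite -(ger0_norm (p_ge0 i)) -sqrtr_sqr ler_sqrt ?sumr_ge0 // => [|j _].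
  by rewrite (bigD1 i) //= lerDl sumr_ge0 // => j _; apply: sqr_ge0.
exact: sqr_ge0.
Qed.

Lemma sqrt_sum_sqr_le1 : Num.sqrt (\sum_j p j ^+ 2) <= 1.
Proof.
rewrite -(sqrtr1 R) ler_sqrt // -sum_p ler_sum // => i _.
by rewrite expr2 ler_piMr ?prob_le1.
Qed.

Lemma sum_mul_sqr_ln_le_card : \sum_i p i * ln (p i) ^+ 2 <= #|I|%:R.
Proof.
apply: (le_trans (y := \sum_(i : I) (1 : R))); last by rewrite sumr_const.
by apply: ler_sum => i _; rewrite mul_sqr_ln_le1 ?p_ge0 ?prob_le1.
Qed.

Lemma sum_mul_sqr_ln_le : 1 <= ln (#|I|%:R : R) ->
  \sum_i p i * ln (p i) ^+ 2 <= 4 * ln (#|I|%:R : R) ^+ 2 * (1 + #|I|%:R^-1).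
Proof.
set n : R := #|I|%:R => L_ge1.
have n_gt0 : 0 < n by rewrite ltNge; apply/negP => /ln0 L0; move: L_ge1; rewrite L0; lra.
apply: (le_trans (y := \sum_i 4 * ln n ^+ 2 * (p i + n ^- 2))).
  by apply: ler_sum => i _; rewrite mul_sqr_ln_le ?p_ge0 ?prob_le1.
rewrite -mulr_sumr big_split /= sum_p sumr_const (_ : n ^- 2 *+ #|I| = n^-1) //.
by rewrite -mulr_natr -/n expr2 invfM -mulrA mulVf ?mulr1 ?gt_eqF.
Qed.

Lemma mul_sum_mul_sqr_ln_le q : (2 <= #|I|)%N -> 0 <= q <= 1 ->
  q * \sum_i p i * ln (p i) ^+ 2 <=
  5 * ln (#|I|%:R : R) ^+ 2 * q + 8 * ln (#|I|%:R : R) ^+ 2 / #|I|%:R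
  + 4 * ln (#|I|%:R : R) ^+ 2 / #|I|%:R ^+ 2.
Proof.
move=> card_ge2 /andP[q_ge0 q_le1].
set n : R := #|I|%:R; set L := ln n; set Phi := \sum_i _.
have n_ge2 : 2 <= n by rewrite (ler_nat R 2).
have L2_ge0 : 0 <= L ^+ 2 := sqr_ge0 L.
have [card_ge3|card_lt3] := leqP 3 #|I|.
  have L_ge1 : 1 <= L.
    by apply: le_trans (ln3_ge1 R) _; rewrite ler_ln ?posrE ?(ler_nat R 3) //; lra.
  have : q * Phi <= q * (4 * L ^+ 2 * (1 + n^-1)).
    by rewrite ler_wpM2l // sum_mul_sqr_ln_le.
  have nV_ge0 : 0 <= n^-1 by rewrite invr_ge0; lra.
  have : 0 <= L ^+ 2 * n^-1 ^+ 2 by rewrite mulr_ge0 ?sqr_ge0.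
  rewrite -exprVn; nra.
have card2 : #|I| = 2%N by apply/eqP; rewrite eqn_leq card_ge2 andbT -ltnS.
have nE : n = 2 by rewrite /n card2.
have : q * Phi <= q * 2 by rewrite ler_wpM2l // -nE sum_mul_sqr_ln_le_card.
have L_ge : 2^-1 <= L by rewrite /L nE ln2_ge_half.
have : 2^-1 ^+ 2 <= L ^+ 2 by rewrite lerXn2r ?nnegrE //; lra.
rewrite /L nE; nra.
Qed.

End ProbabilityVector.

Lemma abs2E (R : realType) (z : R[i]) : (abs2 R z)%:C = z * z^*.
Proof. by rewrite /abs2 add_Re2_Im2 normCK. Qed.

Lemma abs2_ge0 (R : realType) (z : R[i]) : 0 <= abs2 R z.
Proof. by rewrite addr_ge0 ?sqr_ge0. Qed.

Lemma abs2M (R : realType) (z w : R[i]) : abs2 R (z * w) = abs2 R z * abs2 R w.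
Proof. by case: z => a b; case: w => c d; rewrite /abs2 /=; ring. Qed.

Lemma abs2_real (R : realType) (a : R) : abs2 R a%:C = a ^+ 2.
Proof. by rewrite /abs2 /= expr0n addr0. Qed.

Section QuadraticForm.
Variables (R : realType) (D : nat).

Definition qform (A : 'M[R[i]]_D) (x : 'cV[R[i]]_D) : R[i] :=
  ((map_mx (@conjc R) x)^T *m A *m x) 0 0.

Lemma qform_pair (A : 'M[R[i]]_D) k l a b :
  qform A (a *: delta_mx k 0 + b *: delta_mx l 0) =
  a^* * a * A k k + a^* * b * A k l + b^* * a * A l k + b^* * b * A l l.
Proof.
have entry i j : (delta_mx 0 i : 'rV_D) *m A *m delta_mx j 0 = (A i j)%:M.
  apply/matrixP => u v; rewrite -rowE !ord1 !mxE (bigD1 j) //= big1 => [|j' /negbTE nj].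
    by rewrite !mxE !eqxx mulr1 addr0.
  by rewrite !mxE nj mulr0.
rewrite /qform map_mxD !map_mxZ !map_delta_mx !linearD !linearZ /= !trmx_delta.
rewrite !mulmxDl -!scalemxAl !entry !mxE /= !mulr1n; ring.
Qed.

End QuadraticForm.

Lemma complex_ext (R : realType) (x y : R[i]) :
  complex.Re x = complex.Re y -> complex.Im x = complex.Im y -> x = y.
Proof. by case: x => a b; case: y => c d /= -> ->. Qed.

Lemma psd2_abs2_le (R : realType) (P S : R) (z : R[i]) :
  (forall a b : R[i],
     0 <= a^* * a * P%:C + a^* * b * z + b^* * a * z^* + b^* * b * S%:C) ->
  abs2 R z <= P * S.
Proof.
move=> Q.
have Q_real (a b : R[i]) r :
    a^* * a * P%:C + a^* * b * z + b^* * a * z^* + b^* * b * S%:C = r%:C -> 0 <= r.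
  by move=> e; rewrite -lecR -e Q.
have z_ge0 := abs2_ge0 z.
have P_ge0 : 0 <= P.
  by apply: (Q_real 1 0); rewrite rmorph1 rmorph0 !(mul1r, mul0r, addr0).
have S_ge0 : 0 <= S.
  by apply: (Q_real 0 1); rewrite rmorph1 rmorph0 !(mul1r, mul0r, add0r).
have h1 : 0 <= P * (P * S - abs2 R z).
  by apply: (Q_real (- z) P%:C); case: (z) => x y; apply: complex_ext; rewrite /abs2 /=; ring.
have h2 : 0 <= S * (P * S - abs2 R z).
  by apply: (Q_real S%:C (- z^*)); case: (z) => x y; apply: complex_ext; rewrite /abs2 /=; ring.
have h3 : 0 <= abs2 R z * P - 2 * abs2 R z + S.
  by apply: (Q_real (- z) 1); case: (z) => x y; apply: complex_ext; rewrite /abs2 /=; ring.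
have [P_gt0|P_le0] := ltrP 0 P; first by rewrite pmulr_rge0 // subr_ge0 in h1.
have [S_gt0|S_le0] := ltrP 0 S; first by rewrite pmulr_rge0 // subr_ge0 in h2.
have P0 : P = 0 by apply/le_anti/andP.
have S0 : S = 0 by apply/le_anti/andP.
by rewrite P0 S0 in h3 *; lra.
Qed.

Section DensityMatrix.
Variables (R : realType) (D : nat) (rho : 'M[R[i]]_D).
Hypothesis rho_dm : density_matrix R D rho.

Lemma dm_qform_ge0 x : 0 <= qform rho x.
Proof. exact: rho_dm.2.1. Qed.

Lemma dm_adj k l : rho l k = (rho k l)^*.
Proof. by have := congr1 (fun M : 'M_D => M l k) rho_dm.1; rewrite /adjmx !mxE => <-. Qed.

Lemma dm_diag_ge0 k : 0 <= rho k k.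
Proof.
have := dm_qform_ge0 (1 *: delta_mx k 0 + 0 *: delta_mx k 0).
by rewrite qform_pair rmorph1 rmorph0 !(mul1r, mul0r, mulr0, addr0).
Qed.

Lemma dm_diagE k : rho k k = (complex.Re (rho k k))%:C.
Proof. by rewrite RRe_real // ger0_real // dm_diag_ge0. Qed.

Lemma dm_Re_diag_ge0 k : 0 <= complex.Re (rho k k).
Proof. by rewrite -ler0c -dm_diagE dm_diag_ge0. Qed.

Lemma dm_sum_Re_diag : \sum_k complex.Re (rho k k) = 1.
Proof. by have := congr1 (@complex.Re R) rho_dm.2.2; rewrite /mxtrace raddf_sum. Qed.

Lemma abs2_dm_le k l :
  abs2 R (rho k l) <= complex.Re (rho k k) * complex.Re (rho l l).
Proof.
apply: psd2_abs2_le => a b.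
by rewrite -!dm_diagE -dm_adj -qform_pair dm_qform_ge0.
Qed.

End DensityMatrix.

Section Unitary.
Variables (R : realType) (D : nat) (U : 'M[R[i]]_D).
Hypothesis U_unitary : unitary R D U.

Lemma unitary_row_orth n m : \sum_l U n l * (U m l)^* = (n == m)%:R.
Proof.
have := congr1 (fun M : 'M_D => M n m) U_unitary; rewrite !mxE => <-.
by apply: eq_bigr => l _; rewrite !mxE.
Qed.

Lemma unitary_col_abs2 k : \sum_m abs2 R (U m k) = 1.
Proof.
apply: (@complexI R); rewrite rmorph_sum rmorph1 /=.
have := congr1 (fun M : 'M_D => M k k) (mulmx1C U_unitary); rewrite !mxE eqxx mulr1n => <-.
by apply: eq_bigr => m _; rewrite abs2E !mxE mulrC.
Qed.

Lemma unitary_parseval (z : 'I_D -> R[i]) :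
  \sum_l abs2 R (\sum_m z m * (U m l)^*) = \sum_m abs2 R (z m).
Proof.
apply: (@complexI R); rewrite !rmorph_sum /=.
transitivity (\sum_l \sum_m \sum_n z m * (z n)^* * (U n l * (U m l)^*)).
  apply: eq_bigr => l _; rewrite abs2E rmorph_sum big_distrl; apply: eq_bigr => m _ /=.
  by rewrite big_distrr; apply: eq_bigr => n _ /=; rewrite rmorphM /= conjCK; ring.
rewrite exchange_big /=; apply: eq_bigr => m _.
rewrite exchange_big /= (bigD1 m) //= -big_distrr /= unitary_row_orth eqxx mulr1 abs2E.
by rewrite big1 ?addr0 // => n nm; rewrite -big_distrr /= unitary_row_orth (negbTE nm) mulr0.
Qed.

End Unitary.

Lemma sum4_exchange (V : nmodType) (I : finType) (P : I -> pred I)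
    (F : I -> I -> I -> I -> V) :
  \sum_m \sum_n \sum_k \sum_(l | P k l) F m n k l =
  \sum_k \sum_(l | P k l) \sum_m \sum_n F m n k l.
Proof.
transitivity (\sum_m \sum_k \sum_n \sum_(l | P k l) F m n k l).
  by apply: eq_bigr => m _; rewrite exchange_big.
rewrite exchange_big; apply: eq_bigr => k _ /=.
transitivity (\sum_m \sum_(l | P k l) \sum_n F m n k l).
  by apply: eq_bigr => m _; rewrite exchange_big.
by rewrite exchange_big.
Qed.

Section LogarithmicCoherence.
Variables (R : realType) (D : nat) (U rho : 'M[R[i]]_D).

Definition ln_mu_coef k l : R[i] :=
  \sum_m (ln (mu R D U rho m))%:C * U m k * (U m l)^*.

(* ln 0 = 0 in the library, so the convention for mu = 0 in Rsum is automatic *)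
Lemma RsumE :
  Rsum R D U rho =
  (\sum_k \sum_(l | l != k) abs2 R (rho k l) * abs2 R (ln_mu_coef k l))%:C.
Proof.
set a := fun m => (ln (mu R D U rho m))%:C.
transitivity (\sum_m \sum_n nu R D U rho m n * (a m * a n)).
  apply: eq_bigr => m _; apply: eq_bigr => n _; case: ifP => [/orP mu0|_].
    have a0 i : mu R D U rho i = 0 -> a i = 0 by move=> mu_i0; rewrite /a mu_i0 ln0.
    by case: mu0 => /eqP/a0 ->; rewrite !(mul0r, mulr0).
  by rewrite rmorphM.
rewrite rmorph_sum; under [RHS]eq_bigr => k _ do rewrite rmorph_sum.
transitivity (\sum_m \sum_n \sum_k \sum_(l | l != k)
  (abs2 R (rho k l))%:C * (a m * U m k * (U m l)^*) * (a n * (U n k)^* * U n l)).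
  apply: eq_bigr => m _; apply: eq_bigr => n _; rewrite big_distrl.
  by apply: eq_bigr => k _ /=; rewrite big_distrl; apply: eq_bigr => l _ /=; ring.
rewrite sum4_exchange; apply: eq_bigr => k _; apply: eq_bigr => l _.
have coefJ : (ln_mu_coef k l)^* = \sum_n a n * (U n k)^* * U n l.
  rewrite rmorph_sum; apply: eq_bigr => n _; rewrite !rmorphM /= conjCK.
  by congr (_ * _ * _); apply: conjc_real.
rewrite rmorphM /= !abs2E coefJ /ln_mu_coef big_distrl mulr_sumr /=.
apply: eq_bigr => m _; rewrite big_distrr mulr_sumr /=.
by apply: eq_bigr => n _; ring.
Qed.

End LogarithmicCoherence.

Section DensityUnitary.
Variables (R : realType) (D : nat) (U rho : 'M[R[i]]_D).
Hypotheses (rho_dm : density_matrix R D rho) (U_unitary : unitary R D U).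

Lemma mu_ge0 m : 0 <= mu R D U rho m.
Proof. by apply: sumr_ge0 => k _; rewrite mulr_ge0 ?abs2_ge0 ?dm_Re_diag_ge0. Qed.

Lemma sum_mu : \sum_m mu R D U rho m = 1.
Proof.
rewrite exchange_big /= -(dm_sum_Re_diag rho_dm); apply: eq_bigr => k _.
by rewrite -mulr_suml unitary_col_abs2 ?mul1r.
Qed.

Lemma sum_abs2_ln_mu_coef k :
  \sum_l abs2 R (ln_mu_coef U rho k l) =
  \sum_m ln (mu R D U rho m) ^+ 2 * abs2 R (U m k).
Proof.
transitivity (\sum_m abs2 R ((ln (mu R D U rho m))%:C * U m k)).
  exact: (unitary_parseval U_unitary (fun m => (ln (mu R D U rho m))%:C * U m k)).
by apply: eq_bigr => m _; rewrite abs2M abs2_real.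
Qed.

Lemma ln_mu_coherence_le :
  \sum_k \sum_(l | l != k) abs2 R (rho k l) * abs2 R (ln_mu_coef U rho k l) <=
  Num.sqrt (\sum_n complex.Re (rho n n) ^+ 2) *
    \sum_m mu R D U rho m * ln (mu R D U rho m) ^+ 2.
Proof.
set q := Num.sqrt _; set c := ln_mu_coef U rho.
have p_ge0 := dm_Re_diag_ge0 rho_dm.
have p_le_q k : complex.Re (rho k k) <= q := le_sqrt_sum_sqr p_ge0 k.
apply: (le_trans (y := \sum_k complex.Re (rho k k) * q * \sum_l abs2 R (c k l))).
  apply: ler_sum => k _; rewrite mulr_sumr [X in _ <= X](bigD1 k) //=.
  rewrite ler_wpDl ?mulr_ge0 ?abs2_ge0 ?sqrtr_ge0 // ler_sum // => l _.
  rewrite ler_wpM2r ?abs2_ge0 // (le_trans (abs2_dm_le rho_dm k l)) //.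
  by rewrite ler_wpM2l.
rewrite [X in X <= _](_ : _ = q * \sum_m mu R D U rho m * ln (mu R D U rho m) ^+ 2) //.
under eq_bigr do rewrite sum_abs2_ln_mu_coef.
rewrite mulr_sumr; under eq_bigr do rewrite mulr_sumr.
rewrite exchange_big /=; apply: eq_bigr => m _.
by rewrite /mu mulr_suml mulr_sumr; apply: eq_bigr => k _; ring.
Qed.

End DensityUnitary.

Theorem theorem3 (R : realType) (D : nat) (hD : (2 <= D)%N)
    (rho U : 'M[R[i]]_D) :
  @density_matrix R D rho -> @unitary R D U ->
  @Rsum R D U rho <=
    (5 * ln (D%:R : R) ^+ 2 / Num.sqrt (@Deff R D rho)
     + 8 * ln (D%:R : R) ^+ 2 / D%:R
     + 4 * ln (D%:R : R) ^+ 2 / (D%:R ^+ 2))%:C.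
Proof.
move=> rho_dm U_unitary.
rewrite RsumE lecR; apply: le_trans (ln_mu_coherence_le rho_dm U_unitary) _.
have p_ge0 := dm_Re_diag_ge0 rho_dm; have sum_p := dm_sum_Re_diag rho_dm.
rewrite /Deff sqrtrV ?sumr_ge0 // => [|n _]; last exact: sqr_ge0.
have := mul_sum_mul_sqr_ln_le (mu_ge0 U rho_dm) (sum_mu rho_dm U_unitary).
rewrite card_ord invrK; apply; rewrite ?sqrtr_ge0 ?sqrt_sum_sqr_le1 //.
Qed.
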